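(* If $p$ is an odd prime then $\mathcal{D}_p\sim(1-A_p^2)^{\frac{p-3}{2}}$; if $p$ is twice an odd prime then $\mathcal{D}_p\sim\sqrt2\,(1+\alpha_p^4)^{\frac{p/2-3}{2}}$.
   Context: $\alpha_p=e^{2\pi i/(4p)}$, $A_p=\alpha_p^2$; $k_p=\mathbb{Z}[A_p,1/p]$ if $p\equiv-1\pmod 4$, $\mathbb{Z}[\alpha_p,1/p]$ if $p\equiv1,2\pmod4$; $\mathcal{O}_p$ its ring of integers. $\mathcal{D}_p=\langle S^3_\flat\rangle_p^{-1}$ where $\langle\ \rangle_p$ is the Blanchet–Habegger–Masbaum–Vogel quantum invariant at $A=A_p$ and $S^3_\flat$ is $S^3$ with weight $0$. For $a,b\in\mathcal{O}_p$ (or nonzero elements of its fraction field), $a\sim b$ means $a/b$ is a unit of $\mathcal{O}_p$. *)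

From mathcomp Require Import all_boot all_order all_algebra.
From mathcomp Require Import all_field.
Set Implicit Arguments. Unset Strict Implicit. Unset Printing Implicit Defensive.
Import Order.TTheory GRing.Theory Num.Theory.
Local Open Scope ring_scope.

(* alpha_p = e^{2 pi i/(4p)}: the (2p)-th root of -1 with minimal
   non-negative argument (algC's n.-root convention). *)
Definition alpha (p : nat) : algC := (2 * p)%N.-root (-1).
Definition Ap (p : nat) : algC := alpha p ^+ 2.

Definition qint (A : algC) (n : nat) : algC :=
  (A ^+ (2 * n) - A ^- (2 * n)) / (A ^+ 2 - A ^- 2).

(* Kauffman bracket of the unknot coloured by the Jones-Wenzl idempotent e_i *)
Definition bracket_e (A : algC) (i : nat) : algC := (-1) ^+ i * qint A i.+1.

(* <Omega_p> = <unknot coloured by omega_p> (BHMV):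
   p odd  : omega_p = sum_{j=0}^{(p-3)/2} <e_{2j}> e_{2j}
   p even : omega_p = sum_{i=0}^{p/2-2} <e_i> e_i          *)
Definition Omega (p : nat) : algC :=
  if odd p then \sum_(j < (p.-1)./2) bracket_e (Ap p) (2 * j) ^+ 2
  else \sum_(i < p./2 - 1) bracket_e (Ap p) i ^+ 2.

(* a ~ b : a/b is a unit of O_p.  Since a/b lies in the cyclotomic field,
   it is a unit of its ring of integers iff a/b and b/a are algebraic
   integers. *)
Definition assoc (a b : algC) : bool :=
  [&& a != 0, b != 0, a / b \in Aint & b / a \in Aint].

(* eta^-2 = Omega_p, and summing the squared quantum integers over the
   nontrivial powers of the root of unity A_p^4 = alpha_p^8 gives
   Omega_p = - p alpha_p^8 / (1 - alpha_p^8)^2; alpha_p^8 <> 1 because algC's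
   root of -1 has minimal argument, so that Re (alpha_p^2) > 0.  Put z = alpha_p^4
   if p is an odd prime and z = - alpha_p^4 if p = 2q: z is a primitive root of
   unity of prime order q, the (1 - z^k)/(1 - z) are cyclotomic units, and
   q = prod_k (1 - z^k) is (1 - z)^(q-1) times a unit.  Hence eta^-2 is
   (1 - z)^(q-3), resp. 2 (1 - z)^(q-3), up to a unit, and a number whose square
   is a unit is a unit since algebraic integers are integrally closed. *)

From HB Require Import structures.
From mathcomp Require Import all_boot all_order all_algebra.
From mathcomp Require Import all_field.
From mathcomp Require Import zify ring.

Set Implicit Arguments.
Unset Strict Implicit.
Unset Printing Implicit Defensive.

Import Order.TTheory GRing.Theory Num.Theory.
Local Open Scope ring_scope.

Definition Aunit : {pred algC} :=
  fun u => [&& u != 0, u \in Aint & u^-1 \in Aint].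

Lemma AunitE (u : algC) :
  (u \in Aunit) = [&& u != 0, u \in Aint & u^-1 \in Aint].
Proof. by []. Qed.

Fact Aunit_divr_closed : divr_closed Aunit.
Proof.
split=> [|u v /and3P[u0 Au Au'] /and3P[v0 Av Av']].
  by apply/and3P; rewrite oner_eq0 invr1 rpred1.
by apply/and3P; rewrite mulf_neq0 ?invr_eq0 // invf_div !rpredM.
Qed.
HB.instance Definition _ := GRing.isDivClosed.Build algC Aunit Aunit_divr_closed.

(* x is a root of the monic integral polynomial minCpoly (x ^+ n) \Po 'X^n. *)
Lemma Aint_of_exprn n (x : algC) : (0 < n)%N -> x ^+ n \in Aint -> x \in Aint.
Proof.
move=> n_gt0 Axn; apply: (@root_monic_Aint (minCpoly (x ^+ n) \Po 'X^n)).
- by rewrite rootE horner_comp hornerXn -rootE root_minCpoly.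
- by rewrite monicE lead_coef_comp ?size_polyXn ?ltnS // lead_coefXn expr1n
    mulr1 (monicP (minCpoly_monic _)).
- by rewrite polyOver_comp ?polyOverXn.
Qed.

Lemma Aunit_of_exprn n (u : algC) : (0 < n)%N -> u ^+ n \in Aunit -> u \in Aunit.
Proof.
move=> n_gt0 /and3P[un0 Aun Aun']; apply/and3P; split.
- by apply: contra un0 => /eqP->; rewrite expr0n gtn_eqF.
- exact: Aint_of_exprn Aun.
- by apply: (Aint_of_exprn n_gt0); rewrite exprVn.
Qed.

Lemma Aunit_unity_root n (z : algC) : (0 < n)%N -> z ^+ n = 1 -> z \in Aunit.
Proof. by move=> n_gt0 zn; apply: (Aunit_of_exprn n_gt0); rewrite zn rpred1. Qed.

Lemma assoc_Aunit (a b : algC) : assoc a b = (b != 0) && (a / b \in Aunit).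
Proof.
rewrite /assoc AunitE invf_div mulf_eq0 invr_eq0 negb_or.
by case: (b =P 0) => _; rewrite ?andbF ?andbT.
Qed.

Lemma geometric_Aint (z : algC) k :
  z \in Aint -> z != 1 -> (1 - z ^+ k) / (1 - z) \in Aint.
Proof.
move=> Az z_neq1; have z1_neq0 : 1 - z != 0 by rewrite subr_eq0 eq_sym.
have -> : 1 - z ^+ k = (1 - z) * \sum_(i < k) z ^+ i.
  by apply: oppr_inj; rewrite opprB -mulNr opprB subrX1.
by rewrite mulrC mulKf // rpred_sum // => i _; rewrite rpredX.
Qed.

Lemma prim_root_neq1 (R : nzRingType) n (z : R) :
  (1 < n)%N -> n.-primitive_root z -> z != 1.
Proof.
move=> n_gt1 prim_z; apply: contraTneq n_gt1 => z1.
by have := prim_order_dvd prim_z 1; rewrite expr1 z1 eqxx dvdn1 => /eqP->.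
Qed.

Lemma prime_prim_root (R : nzRingType) q (z : R) :
  prime q -> z ^+ q = 1 -> z != 1 -> q.-primitive_root z.
Proof.
move=> q_pr zq1 z_neq1.
have [m prim_z m_dvd_q] := prim_order_exists (prime_gt0 q_pr) zq1.
case/primeP: q_pr => _ /(_ m m_dvd_q) /orP[/eqP m1 | /eqP <- //].
by move: z_neq1; rewrite -[z]expr1 -m1 prim_expr_order ?eqxx.
Qed.

Lemma Aunit_cyclotomic n (z : algC) k : (1 < n)%N -> n.-primitive_root z ->
  coprime k n -> (1 - z ^+ k) / (1 - z) \in Aunit.
Proof.
move=> n_gt1 prim_z co_kn.
have prim_zk : n.-primitive_root (z ^+ k) by rewrite prim_root_exp_coprime.
have z_neq1 := prim_root_neq1 n_gt1 prim_z.
have zk_neq1 := prim_root_neq1 n_gt1 prim_zk.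
have Az := Aint_prim_root prim_z.
have [l def_z] := prim_rootP prim_zk (prim_expr_order prim_z).
rewrite AunitE invf_div; apply/and3P; split.
- by rewrite mulf_neq0 ?invr_eq0 ?subr_eq0 // eq_sym.
- exact: geometric_Aint.
- by rewrite {1}def_z geometric_Aint ?rpredX.
Qed.

Lemma prim_root_prod_one_sub (F : fieldType) n (z : F) :
  n.-primitive_root z -> n%:R = \prod_(1 <= k < n) (1 - z ^+ k).
Proof.
move=> prim_z; have n_gt0 := prim_order_gt0 prim_z.
have X1_neq0 : 'X - 1 != 0 :> {poly F} by rewrite -polyC1 polyXsubC_eq0.
have := factor_Xn_sub_1 prim_z.
rewrite big_ltn // expr0 polyC1 subrX1 => /(mulfI X1_neq0)/(congr1 (horner^~ 1)).
rewrite horner_sum horner_prod.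
under eq_bigr do rewrite hornerXsubC.
under [in RHS]eq_bigr do rewrite hornerXn expr1n.
by rewrite sumr_const card_ord => <-.
Qed.

Lemma Aunit_prime_div_cyclotomic q (z : algC) : prime q ->
  q.-primitive_root z -> q%:R / (1 - z) ^+ q.-1 \in Aunit.
Proof.
move=> q_pr prim_z.
rewrite (prim_root_prod_one_sub prim_z) -subn1 -prodr_const_nat.
rewrite -prodf_div big_nat rpred_prod // => k /andP[k_gt0 k_ltq].
rewrite (Aunit_cyclotomic (prime_gt1 q_pr)) // coprime_sym prime_coprime //.
by rewrite gtnNdvd.
Qed.

Lemma odd_prime_gt2 p : prime p -> odd p -> (2 < p)%N.
Proof.
move=> p_pr p_odd; rewrite ltn_neqAle prime_gt1 // andbT.
by apply: contraTneq p_odd => <-.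
Qed.

Lemma assoc_prime_cyclotomic q (z N a b : algC) :
  prime q -> odd q -> q.-primitive_root z -> N != 0 ->
  a ^+ 2 = - (N * q%:R) * z ^+ 2 / (1 - z ^+ 2) ^+ 2 ->
  b ^+ 2 = N * (1 - z) ^+ (q - 3) -> assoc a b.
Proof.
move=> q_pr q_odd prim_z N_neq0 def_a2 def_b2.
have q_gt1 := prime_gt1 q_pr.
have q_gt2 := odd_prime_gt2 q_pr q_odd.
have z1_neq0 : 1 - z != 0 by rewrite subr_eq0 eq_sym (prim_root_neq1 q_gt1).
have z2_unit : (1 - z ^+ 2) / (1 - z) \in Aunit.
  by rewrite (Aunit_cyclotomic q_gt1) ?coprime2n.
have z21_neq0 : 1 - z ^+ 2 != 0.
  by apply: contraTneq z2_unit => ->; rewrite mul0r AunitE eqxx.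
have b_neq0 : b != 0.
  apply: contraNneq (mulf_neq0 N_neq0 (expf_neq0 (q - 3) z1_neq0)) => b0.
  by rewrite -def_b2 b0 expr0n.
have def_ab2 : (a / b) ^+ 2 =
    -1 * z ^+ 2 * (q%:R / (1 - z) ^+ q.-1) * (((1 - z ^+ 2) / (1 - z)) ^+ 2)^-1.
  have -> : q.-1 = (q - 3 + 2)%N by lia.
  rewrite expr_div_n def_a2 def_b2 exprD; field.
  by rewrite N_neq0 z1_neq0 z21_neq0 expf_neq0.
rewrite assoc_Aunit b_neq0; apply: (Aunit_of_exprn (n := 2)) => //.
have z_unit := Aunit_unity_root (prime_gt0 q_pr) (prim_expr_order prim_z).
have m1_unit : -1 \in Aunit.
  by apply: (Aunit_unity_root (n := 2)); rewrite // sqrrN expr1n.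
rewrite def_ab2; apply: rpredM; last by rewrite rpredV rpredX.
by apply: rpredM; [rewrite rpredM ?rpredX | apply: Aunit_prime_div_cyclotomic].
Qed.

Lemma sum_pairs (V : zmodType) m (f : nat -> V) :
  \sum_(j < m) (f j.*2 + f j.*2.+1) = \sum_(k < m.*2) f k.
Proof.
elim: m => [|m IHm]; first by rewrite !big_ord0.
by rewrite big_ord_recr IHm doubleS !big_ord_recr /= addrA.
Qed.

Section UnityRootSums.

Variables (F : fieldType) (n : nat) (y : F).
Hypotheses (n_gt0 : (0 < n)%N) (yn1 : y ^+ n = 1) (y_neq1 : y != 1).

Lemma unity_root_exprV k : (k <= n)%N -> y ^- k = y ^+ (n - k).
Proof.
move=> le_kn; have y_neq0 : y != 0.
  by apply: contra_eq_neq yn1 => ->; rewrite expr0n gtn_eqF // eq_sym oner_eq0.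
by apply: (mulIf (expf_neq0 k y_neq0)); rewrite mulVf ?expf_neq0 // -exprD subnK.
Qed.

Lemma sum_unity_root_expr0 : \sum_(k < n) y ^+ k = 0.
Proof.
have : (y - 1) * \sum_(k < n) y ^+ k = 0 by rewrite -subrX1 yn1 subrr.
by move/eqP; rewrite mulf_eq0 subr_eq0 (negPf y_neq1) => /eqP.
Qed.

Lemma sum_unity_root_expr : \sum_(k < n.-1) y ^+ k.+1 = -1.
Proof.
have /eqP := sum_unity_root_expr0; rewrite -(prednK n_gt0) big_ord_recl.
by rewrite expr0 addrC addr_eq0 => /eqP.
Qed.

Lemma sum_unity_root_exprV : \sum_(k < n.-1) y ^- k.+1 = -1.
Proof.
rewrite (reindex_inj rev_ord_inj) -sum_unity_root_expr.
apply: eq_bigr => k _ /=.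
have lt_k := ltn_ord k.
by rewrite unity_root_exprV; [congr (y ^+ _) | ]; lia.
Qed.

Lemma sum_unity_root_exprDV : \sum_(k < n.-1) (y ^+ k.+1 + y ^- k.+1) = -2.
Proof. by rewrite big_split /= sum_unity_root_expr sum_unity_root_exprV -opprD. Qed.

Lemma sum_unity_root_odd_exprDV m : n = m.*2.+1 ->
  \sum_(j < m) (y ^+ j.*2.+1 + y ^- j.*2.+1) = -1.
Proof.
move=> def_n; rewrite big_split /= [X in _ + X](reindex_inj rev_ord_inj) /=.
under [X in _ + X]eq_bigr => j _.
  have lt_jm := ltn_ord j.
  rewrite unity_root_exprV; last by rewrite def_n; lia.
  rewrite (_ : n - _ = j.*2.+1.+1)%N; last by rewrite def_n; lia.
  over.
rewrite -big_split /= (sum_pairs _ (fun k => y ^+ k.+1)) -sum_unity_root_expr.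
by rewrite def_n.
Qed.

End UnityRootSums.

Lemma Re_sqr (w : algC) : 'Re (w ^+ 2) = 2 * 'Re w ^+ 2 - `|w| ^+ 2.
Proof. by rewrite expr2 ReM -!expr2 normC2_Re_Im; ring. Qed.

Lemma sqr_Re_eq0 (w : algC) : 'Re w = 0 -> w ^+ 2 = - `|w| ^+ 2.
Proof.
move=> Rew0; rewrite normC2_Re_Im Rew0 expr0n add0r.
by rewrite {1}[w]Crect Rew0 add0r exprMn sqrCi mulN1r.
Qed.

Lemma norm_eq1_of_expr n (z : algC) : (0 < n)%N -> `|z ^+ n| = 1 -> `|z| = 1.
Proof.
by move=> n_gt0 zn1; apply/eqP; rewrite -(pexpr_eq1 n_gt0) // -normrX zn1.
Qed.

(* The squares of the n-th roots a z^k sum to 0, so if none had positive real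
   part they would all be purely imaginary; comparing k = 0 and k = 1 then
   forces z^4 = 1. *)
Lemma exists_root_Re_sqr_gt0 n (a : algC) : (4 < n)%N -> a != 0 ->
  exists2 y : algC, y ^+ n = a ^+ n & 0 < 'Re (y ^+ 2).
Proof.
move=> n_gt4 a_neq0; have n_gt0 : (0 < n)%N by apply: leq_trans n_gt4.
have [z prim_z] := C_prim_root_exists n_gt0.
have zn1 := prim_expr_order prim_z.
case: (boolP [exists k : 'I_n, 0 < 'Re ((a * z ^+ k) ^+ 2)]).
  case/existsP=> k Re_gt0; exists (a * z ^+ k) => //.
  by rewrite exprMn exprAC zn1 expr1n mulr1.
rewrite negb_exists => /forallP Re_le0; exfalso.
have sum_Re0 : \sum_(k < n) 'Re ((a * z ^+ k) ^+ 2) = 0.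
  have z2_neq1 : z ^+ 2 != 1.
    by rewrite -(prim_order_dvd prim_z); apply/negP => /dvdn_leq; lia.
  rewrite -raddf_sum (eq_bigr (fun k : 'I_n => a ^+ 2 * (z ^+ 2) ^+ k)).
    by rewrite -mulr_sumr sum_unity_root_expr0 ?mulr0 ?raddf0 // exprAC zn1 expr1n.
  by move=> k _; rewrite exprMn exprAC.
have Re0 (k : 'I_n) : 'Re ((a * z ^+ k) ^+ 2) = 0.
  have Re_ge0 (j : 'I_n) : true -> 0 <= - 'Re ((a * z ^+ j) ^+ 2).
    by rewrite oppr_ge0 real_leNgt ?Re_le0 ?Creal_Re.
  apply: oppr_inj; rewrite oppr0; have := psumr_eq0P Re_ge0.
  by rewrite sumrN sum_Re0 oppr0 => /(_ erefl k isT).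
have z_norm1 : `|z| = 1 by apply: (norm_eq1_of_expr n_gt0); rewrite zn1 normr1.
have n_gt1 : (1 < n)%N by lia.
have := sqr_Re_eq0 (Re0 (Ordinal n_gt1)).
have := sqr_Re_eq0 (Re0 (Ordinal n_gt0)).
rewrite /= expr0 mulr1 expr1 => a4 /eqP.
have -> : `|(a * z) ^+ 2| = `|a ^+ 2|.
  by rewrite exprMn normrM [`|z ^+ 2|]normrX z_norm1 expr1n mulr1.
rewrite -a4 -exprM exprMn exprM -[X in _ == X]mulr1 (inj_eq (mulfI _)).
  by rewrite -(prim_order_dvd prim_z) => /dvdn_leq; lia.
by rewrite !expf_neq0.
Qed.

Lemma rootC_Re_norm_le n (x y : algC) : (0 < n)%N -> ~~ odd n -> x \is Creal ->
  y ^+ n = x -> `|'Re y| <= 'Re (n.-root x).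
Proof.
move=> n_gt0 n_even x_real.
have conj_root y' : y' ^+ n = x -> y'^* ^+ n = x.
  by rewrite -rmorphXn => ->; apply/CrealP.
wlog Im_ge0 : y / 0 <= 'Im y => [wlog_y yn | yn].
  have [Im_ge0|Im_lt0] := boolP (0 <= 'Im y); first exact: wlog_y Im_ge0 yn.
  rewrite -Re_conj; apply: wlog_y; last exact: conj_root.
  by rewrite Im_conj oppr_ge0 ltW // real_ltNge ?Creal_Im.
apply/real_ler_normlP; first exact: Creal_Re.
split; last exact: rootC_Re_max.
rewrite -Re_conj -raddfN; apply: rootC_Re_max => //.
  by rewrite exprNn -signr_odd (negPf n_even) mul1r conj_root.
by rewrite raddfN /= Im_conj opprK.
Qed.

Lemma Re_sqr_rootC_gt0 n (x : algC) : (4 < n)%N -> ~~ odd n -> x \is Creal ->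
  x != 0 -> 0 < 'Re (n.-root x ^+ 2).
Proof.
move=> n_gt4 n_even x_real x_neq0; have n_gt0 : (0 < n)%N by lia.
set r := n.-root x; have rn : r ^+ n = x := rootCK n_gt0 x.
have r_neq0 : r != 0 by rewrite rootC_eq0.
have [y yn Re_y2_gt0] := exists_root_Re_sqr_gt0 n_gt4 r_neq0.
have norm_y : `|y| = `|r|.
  by apply/eqP; rewrite -(eqrXn2 n_gt0) ?normr_ge0 // -!normrX yn.
have Re_y_le : `|'Re y| <= 'Re r by apply: rootC_Re_norm_le; rewrite ?yn.
apply: lt_le_trans Re_y2_gt0 _; rewrite !Re_sqr norm_y lerD2r ler_pM2l //.
rewrite -real_normK ?Creal_Re // lerXn2r ?nnegrE //.
exact: le_trans (normr_ge0 _) Re_y_le.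
Qed.

Lemma alpha_expr p : (0 < p)%N -> alpha p ^+ (2 * p) = -1.
Proof. by move=> p_gt0; rewrite rootCK // muln_gt0. Qed.

Lemma alpha8_neq1 p : (2 < p)%N -> alpha p ^+ 8 != 1.
Proof.
move=> p_gt2; have p_gt0 : (0 < p)%N by lia.
set b := alpha p ^+ 2.
have Re_b_gt0 : 0 < 'Re b.
  by apply: Re_sqr_rootC_gt0; rewrite ?oddM ?rpredN1 ?oppr_eq0 ?oner_eq0 //; lia.
have bp : b ^+ p = -1 by rewrite -exprM alpha_expr.
have b_norm1 : `|b| = 1 by apply: (norm_eq1_of_expr p_gt0); rewrite bp normrN1.
have Re_N1 : 'Re (-1 : algC) = -1 by apply/Creal_ReP; rewrite rpredN1.
have -> : alpha p ^+ 8 = (b ^+ 2) ^+ 2 by rewrite -!exprM.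
rewrite sqrf_eq1; apply/negP.
case/orP=> [|/eqP b2].
  rewrite sqrf_eq1 => /orP[/eqP b1 | /eqP bN1].
    move: bp; rewrite b1 expr1n => /eqP.
    by rewrite -subr_eq0 opprK (pnatr_eq0 _ 2).
  by move: Re_b_gt0; rewrite bN1 Re_N1 ltr0N1.
have := Re_sqr b; rewrite b2 Re_N1 b_norm1 expr1n => /eqP.
rewrite eq_sym subr_eq addNr mulf_eq0 pnatr_eq0 /= sqrf_eq0 => /eqP Re_b0.
by move: Re_b_gt0; rewrite Re_b0 ltxx.
Qed.

Lemma alpha_expr4 p : (0 < p)%N -> alpha p ^+ (4 * p) = 1.
Proof.
by move=> p_gt0; rewrite -[4%N]/(2 * 2)%N mulnAC exprM alpha_expr // sqrrN expr1n.
Qed.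

Lemma alpha4_prim_root p : prime p -> odd p -> p.-primitive_root (alpha p ^+ 4).
Proof.
move=> p_pr p_odd; apply: (prime_prim_root p_pr).
  by rewrite -exprM alpha_expr4 ?prime_gt0.
apply: contraNneq (alpha8_neq1 (odd_prime_gt2 p_pr p_odd)) => a4_1.
by rewrite -[8%N]/(4 * 2)%N exprM a4_1 expr1n.
Qed.

Lemma neg_alpha4_prim_root q : prime q -> odd q ->
  q.-primitive_root (- alpha (2 * q) ^+ 4).
Proof.
move=> q_pr q_odd; have q_gt0 := prime_gt0 q_pr.
have two_q_gt2 : (2 < 2 * q)%N by have := prime_gt1 q_pr; lia.
apply: (prime_prim_root q_pr).
  rewrite exprNn -signr_odd q_odd -exprM -[4%N]/(2 * 2)%N -mulnA.
  by rewrite alpha_expr ?muln_gt0 // mulN1r opprK.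
apply: contraNneq (alpha8_neq1 two_q_gt2) => a4_1.
by rewrite -[8%N]/(4 * 2)%N exprM -sqrrN a4_1 expr1n.
Qed.

Lemma bracket_e_sqr (A : algC) i : A != 0 -> bracket_e A i ^+ 2 =
  ((A ^+ 4) ^+ i.+1 + (A ^+ 4) ^- i.+1 - 2) / (A ^+ 2 - A ^- 2) ^+ 2.
Proof.
move=> A_neq0; rewrite /bracket_e /qint exprMn sqrr_sign mul1r expr_div_n.
have u_neq0 : A ^+ (2 * i.+1) != 0 by rewrite expf_neq0.
have -> : (A ^+ 4) ^+ i.+1 = (A ^+ (2 * i.+1)) ^+ 2.
  by rewrite -!exprM; congr (A ^+ _); lia.
by congr (_ / _); field.
Qed.

Section BracketSums.

Variables (A : algC) (m : nat).
Hypotheses (A_neq0 : A != 0) (A4_neq1 : A ^+ 4 != 1).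

Lemma sum_bracket_e_sqr_odd : (A ^+ 4) ^+ m.*2.+1 = 1 ->
  \sum_(j < m) bracket_e A (2 * j) ^+ 2 = - m.*2.+1%:R / (A ^+ 2 - A ^- 2) ^+ 2.
Proof.
move=> A4n1; under eq_bigr do rewrite bracket_e_sqr // mul2n.
rewrite -mulr_suml sumrB (sum_unity_root_odd_exprDV _ A4n1) //.
rewrite sumr_const card_ord -[m.*2.+1]addn1 -[m.*2]muln2 natrD natrM mulr_natr.
by congr (_ / _); ring.
Qed.

Lemma sum_bracket_e_sqr_even : (0 < m)%N -> (A ^+ 4) ^+ m = 1 ->
  \sum_(i < m.-1) bracket_e A i ^+ 2 = - m.*2%:R / (A ^+ 2 - A ^- 2) ^+ 2.
Proof.
move=> m_gt0 A4m1; under eq_bigr do rewrite bracket_e_sqr //.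
rewrite -mulr_suml sumrB sum_unity_root_exprDV // sumr_const card_ord.
rewrite -[in RHS](prednK m_gt0) -[m.-1.+1.*2]muln2 -[m.-1.+1]addn1.
rewrite natrM natrD mulr_natr.
by congr (_ / _); ring.
Qed.

End BracketSums.

Lemma Omega_alpha p : (2 < p)%N ->
  Omega p = - p%:R * alpha p ^+ 8 / (1 - alpha p ^+ 8) ^+ 2.
Proof.
move=> p_gt2; have p_gt0 : (0 < p)%N by lia.
have a_neq0 : alpha p != 0 by rewrite rootC_eq0 ?muln_gt0 // oppr_eq0 oner_eq0.
have A_neq0 : Ap p != 0 by rewrite expf_neq0.
have A4 : Ap p ^+ 4 = alpha p ^+ 8 by rewrite -exprM.
have a8_neq1 := alpha8_neq1 p_gt2.
have a8_unity k : (p %| 2 * k)%N -> (alpha p ^+ 8) ^+ k = 1.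
  case/dvdnP=> j def_k; rewrite -exprM (_ : 8 * k = 4 * p * j)%N; last by nia.
  by rewrite exprM alpha_expr4 // expr1n.
suff -> : Omega p = - p%:R / (Ap p ^+ 2 - Ap p ^- 2) ^+ 2.
  have a81_neq0 : 1 - alpha p ^+ 8 != 0 by rewrite subr_eq0 eq_sym.
  rewrite /Ap -!exprM; field.
  by rewrite a81_neq0 a_neq0 -expr2 -exprM subr_eq0 a8_neq1.
rewrite /Omega; case: ifP => p_odd.
  have def_p : p = (p./2).*2.+1 by rewrite -[LHS]odd_double_half p_odd.
  have -> : (p.-1)./2 = p./2 by rewrite {1}def_p /= doubleK.
  by rewrite sum_bracket_e_sqr_odd -?def_p ?A4 ?a8_unity ?dvdn_mull.
have def_p : p = (p./2).*2 by rewrite -[LHS]odd_double_half p_odd.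
rewrite subn1 sum_bracket_e_sqr_even -?def_p ?A4 ?a8_unity ?mul2n -?def_p //.
lia.
Qed.

Lemma sqr_expr_half (R : ringType) (x : R) n :
  ~~ odd n -> (x ^+ n./2) ^+ 2 = x ^+ n.
Proof.
by move=> n_even; rewrite -exprM muln2 -[in RHS](odd_double_half n) (negPf n_even).
Qed.

Theorem lemma2p4 (p : nat) (eta : algC) (Heta : eta ^+ 2 * Omega p = 1) :
  (prime p -> odd p ->
     assoc eta^-1 ((1 - Ap p ^+ 2) ^+ ((p - 3)./2))) /\
  (forall q : nat, prime q -> odd q -> p = (2 * q)%N ->
     assoc eta^-1 (sqrtC 2 * (1 + alpha p ^+ 4) ^+ ((q - 3)./2))).
Proof.
have eta_inv2 : eta^-1 ^+ 2 = Omega p by rewrite exprVn; apply: mulr1_eq.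
split=> [p_pr p_odd | q q_pr q_odd def_p]; last subst p.
  have p_gt2 := odd_prime_gt2 p_pr p_odd.
  rewrite -exprM; apply: (assoc_prime_cyclotomic (N := 1) p_pr p_odd).
  - exact: alpha4_prim_root.
  - exact: oner_neq0.
  - by rewrite eta_inv2 Omega_alpha // -exprM mul1r.
  - by rewrite mul1r sqr_expr_half // oddB ?p_odd.
have q_gt2 := odd_prime_gt2 q_pr q_odd.
have two_q_gt2 : (2 < 2 * q)%N by lia.
rewrite -[alpha _ ^+ 4]opprK.
apply: (assoc_prime_cyclotomic (N := 2) q_pr q_odd).
- exact: neg_alpha4_prim_root.
- by rewrite pnatr_eq0.
- by rewrite eta_inv2 Omega_alpha // sqrrN -exprM natrM.
- by rewrite exprMn sqrtCK sqr_expr_half // oddB ?q_odd.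
Qed.
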